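(* Let arbitrary values $\boldsymbol y^*_n\in\mathbb R^{MN}_+$ ($n\in\mathcal T$) and $u^*_n\in\mathbb R$ ($n\in\mathcal T\setminus\{1\}$) be given. Define $\boldsymbol x^{MS}_1=\lceil\boldsymbol B_{t_1}\boldsymbol y^*_1\rceil$, $\boldsymbol x^{MS}_n=\max_{m\in\mathcal P(n)}\lceil\boldsymbol B_{t_m}\boldsymbol y^*_m\rceil-\max_{m\in\mathcal P(a(n))}\lceil\boldsymbol B_{t_m}\boldsymbol y^*_m\rceil$ for $n\ne1$, $\eta^{MS}_n=\max_{m\in\mathcal C(n)}\{\boldsymbol f_{t_m}^{\mathsf T}\sum_{l\in\mathcal P(m)}\boldsymbol x^{MS}_l+\boldsymbol c_{t_m}^{\mathsf T}\boldsymbol y^*_m-u^*_m\}$ for $n\notin\mathcal L$, $\boldsymbol x^{TS}_1=\lceil\boldsymbol B_{t_1}\boldsymbol y^*_1\rceil$, $\boldsymbol x^{TS}_n=\max_{m\in\mathcal P(n)}\lceil\max_{l\in\mathcal T_{t_m}}\boldsymbol B_{t_l}\boldsymbol y^*_l\rceil-\max_{m\in\mathcal P(a(n))}\lceil\max_{l\in\mathcal T_{t_m}}\boldsymbol B_{t_l}\boldsymbol y^*_l\rceil$ for $n\ne1$, $\eta^{TS}_n=\max_{m\in\mathcal C(n)}\{\boldsymbol f_{t_m}^{\mathsf T}\sum_{l\in\mathcal P(m)}\boldsymbol x^{TS}_l+\boldsymbol c_{t_m}^{\mathsf T}\boldsymbol y^*_m-u^*_m\}$ for $n\notin\mathcal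 L$. Then $(\boldsymbol x^{MS},\eta^{MS})$ is an optimal solution of $\mathbf{SP\text{-}RMS}(\boldsymbol y^*,u^* )$ and $(\boldsymbol x^{TS},\eta^{TS})$ is an optimal solution of $\mathbf{SP\text{-}RTS}(\boldsymbol y^*,u^* )$; consequently $Q^M(\boldsymbol y^*,u^* )=\sum_{n\in\mathcal T}p_n\big(\tilde{\boldsymbol f}_n^{\mathsf T}\sum_{m\in\mathcal P(n)}\boldsymbol x^{MS}_m+\tilde\lambda_n\eta^{MS}_n\big)$ and $Q^T(\boldsymbol y^*,u^* )=\sum_{n\in\mathcal T}p_n\big(\tilde{\boldsymbol f}_n^{\mathsf T}\sum_{m\in\mathcal P(n)}\boldsymbol x^{TS}_m+\tilde\lambda_n\eta^{TS}_n\big)$.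
   Context: Setting. Fix integers $T\ge 2$, $M\ge1$, $N\ge1$. For each period $t$: maintenance costs $f_{ti}\ge 0$ forming $\boldsymbol f_t\in\mathbb R^M$; operational costs $c_{tij}\ge0$ forming $\boldsymbol c_t\in\mathbb R^{MN}$; capacities $h_{ti}>0$. $\boldsymbol B_t\in\mathbb R^{M\times MN}$ is the matrix with $(\boldsymbol B_t\boldsymbol y)_i=\frac1{h_{ti}}\sum_{j=1}^N y_{ij}$. Ceilings and maxima of vectors are taken componentwise. Scenario tree: a finite rooted tree with node set $\mathcal T$ and root $1$, all root-to-leaf paths having $T$ nodes; $\mathcal T_t$ is the set of nodes at depth $t$, $t_n$ the period of node $n$, $\mathcal L=\mathcal T_T$ the leaves, $a(n)$ the parent of $n\ne1$, $\mathcal C(n)$ the children of $n$, $\mathcal P(n)$ the set of nodes on the root-to-$n$ path (inclusive). Node probabilities $p_n>0$ satisfy $\sum_{n\in\mathcal T_t}p_n=1$ and $\sum_{m\in\mathcal C(n)}p_m=p_n$ for $n\notin\mathcal L$. Risk parameters $\lambda_t\in[0,1]$, $\alpha_t\in(0,1)$, $t=2,\ldots,T$. $\tilde{\boldsymbol f}_n=\boldsymbol f_{t_n}$ if $n=1$, else $(1-\lambda_{t_n})\boldsymbol f_{t_n}$; $\tilde\lambda_n=0$ if $n\in\mathcal L$, else $\lambda_{t_n+1}$. $\mathbf{SP\text{-}RMS}(\boldsymbol y^*,u^* )$: minimize $\sum_{n\in\mathcal T}p_n\big(\tilde{\boldsymbol f}_n^{\mathsf T}\sum_{m\in\mathcal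 P(n)}\boldsymbol x_m+\tilde\lambda_n\eta_n\big)$ over $\boldsymbol x_n\in\mathbb Z^M_+$ ($n\in\mathcal T$), $\eta_n\in\mathbb R$ ($n\notin\mathcal L$), subject to $\sum_{m\in\mathcal P(n)}\boldsymbol x_m\ge\boldsymbol B_{t_n}\boldsymbol y^*_n$ for all $n\in\mathcal T$ and $\eta_{a(n)}\ge\boldsymbol f_{t_n}^{\mathsf T}\sum_{m\in\mathcal P(n)}\boldsymbol x_m+\boldsymbol c_{t_n}^{\mathsf T}\boldsymbol y^*_n-u^*_n$ for all $n\ne1$. Its optimal value is $Q^M(\boldsymbol y^*,u^* )$. $\mathbf{SP\text{-}RTS}(\boldsymbol y^*,u^* )$: the same problem with the additional constraints $\boldsymbol x_m=\boldsymbol x_n$ for all $m,n\in\mathcal T_t$, $t=1,\ldots,T$. Its optimal value is $Q^T(\boldsymbol y^*,u^* )$. *)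

From HB Require Import structures.
From mathcomp Require Import all_boot all_order all_algebra.
From mathcomp Require Import reals.
Set Implicit Arguments. Unset Strict Implicit. Unset Printing Implicit Defensive.
Import Order.TTheory GRing.Theory Num.Theory.
Local Open Scope ring_scope.

Section Defs.
Variable R : realType.
Variable T : finType.          (* node set of the scenario tree *)
Variable r : T.                (* root (node 1) *)
Variable par : T -> T.         (* parent a(n) (value at the root irrelevant) *)
Variable dep : T -> nat.       (* period t_n, root at period 1 *)
Variable Tp : nat.

(* well-formed scenario tree: all root-to-leaf paths have Tp nodes *)
Definition scenario_tree : Prop :=
  [/\ dep r = 1%N,
      (forall n, (0 < dep n)%N),
      (forall n, n != r -> dep n = (dep (par n)).+1),
      (forall n, (dep n <= Tp)%N) &
      (forall n, (dep n < Tp)%N -> exists m, m != r /\ par m = n)].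

(* P(n): nodes on the root-to-n path (inclusive) *)
Definition pathP (n : T) : {set T} :=
  [set m | [exists k : 'I_(dep n), iter k par n == m]].
Definition children (n : T) : {set T} := [set m | (m != r) && (par m == n)].
Definition stage (t : nat) : {set T} := [set n | dep n == t].
Definition is_leaf (n : T) : bool := dep n == Tp.

Variables (M N : nat).
Variable f : nat -> 'I_M -> R.
Variable c : nat -> 'I_M -> 'I_N -> R.
Variable h : nat -> 'I_M -> R.
Variable lam : nat -> R.
Variable p : T -> R.

Definition Bmat (t : nat) (y : 'I_M -> 'I_N -> R) (i : 'I_M) : R :=
  (h t i)^-1 * \sum_(j < N) y i j.

Definition ftil (n : T) (i : 'I_M) : R :=
  if n == r then f (dep n) i else (1 - lam (dep n)) * f (dep n) i.
Definition ltil (n : T) : R := if is_leaf n then 0 else lam (dep n).+1.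

Variable y : T -> 'I_M -> 'I_N -> R.
Variable u : T -> R.

Definition cum (x : T -> 'I_M -> int) (n : T) (i : 'I_M) : int :=
  \sum_(m in pathP n) x m i.

Definition lossn (X : 'I_M -> int) (n : T) : R :=
  \sum_(i < M) f (dep n) i * (X i)%:~R
  + \sum_(i < M) \sum_(j < N) c (dep n) i j * y n i j - u n.

(* objective of SP-RMS / SP-RTS; eta at leaves has coefficient 0 *)
Definition objective (x : T -> 'I_M -> int) (eta : T -> R) : R :=
  \sum_(n : T) p n *
    (\sum_(i < M) ftil n i * (cum x n i)%:~R + ltil n * eta n).

Definition feasible_RMS (x : T -> 'I_M -> int) (eta : T -> R) : Prop :=
  [/\ (forall n i, 0 <= x n i),
      (forall n i, Bmat (dep n) (y n) i <= (cum x n i)%:~R) &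
      (forall n, n != r -> lossn (cum x n) n <= eta (par n))].

Definition feasible_RTS (x : T -> 'I_M -> int) (eta : T -> R) : Prop :=
  feasible_RMS x eta /\
  (forall t m n, m \in stage t -> n \in stage t -> x m = x n).

Definition optimal (feas : (T -> 'I_M -> int) -> (T -> R) -> Prop)
    (x : T -> 'I_M -> int) (eta : T -> R) : Prop :=
  feas x eta /\ forall x' eta', feas x' eta' -> objective x eta <= objective x' eta'.

Definition optimal_value (feas : (T -> 'I_M -> int) -> (T -> R) -> Prop) (v : R) : Prop :=
  (exists x eta, feas x eta /\ objective x eta = v) /\
  (forall x eta, feas x eta -> v <= objective x eta).

(* max over a nonempty family, written with an element of the family as seed *)
Definition cB (m : T) (i : 'I_M) : int := Num.ceil (Bmat (dep m) (y m) i).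

Definition cummaxMS (n : T) (i : 'I_M) : int :=
  \big[Num.max/cB n i]_(m in pathP n) cB m i.

Definition xMS (n : T) (i : 'I_M) : int :=
  if n == r then cB r i else cummaxMS n i - cummaxMS (par n) i.

Definition cBT (m : T) (i : 'I_M) : int :=
  Num.ceil (\big[Num.max/Bmat (dep m) (y m) i]_(l in stage (dep m)) Bmat (dep l) (y l) i).

Definition cummaxTS (n : T) (i : 'I_M) : int :=
  \big[Num.max/cBT n i]_(m in pathP n) cBT m i.

Definition xTS (n : T) (i : 'I_M) : int :=
  if n == r then cB r i else cummaxTS n i - cummaxTS (par n) i.

(* eta_n = max over children m of loss; the value at leaves is irrelevant (0) *)
Definition etaOf (x : T -> 'I_M -> int) (n : T) : R :=
  match [pick m in children n] with
  | Some m0 => \big[Num.max/lossn (cum x m0) m0]_(m in children n) lossn (cum x m) m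
  | None => 0
  end.

Definition etaMS := etaOf xMS.
Definition etaTS := etaOf xTS.

End Defs.

From Pilot Require Import Defs.
From HB Require Import structures.
From mathcomp Require Import all_boot all_order all_algebra.
From mathcomp Require Import reals.
From Stdlib Require Import FunctionalExtensionality.
Set Implicit Arguments. Unset Strict Implicit. Unset Printing Implicit Defensive.
Import Order.TTheory GRing.Theory Num.Theory.
Local Open Scope ring_scope.

(* Both problems see the capacities only through the cumulative sums
   X_n = sum_{m in P(n)} x_m, and x >= 0 makes X nondecreasing along root paths.
   Integrality and the capacity constraints force X_n >= ceil(B y_m) for every
   m in P(n), i.e. X_n is at least the running maximum of ceil(B y) along the
   path, and the increments of that running maximum attain this bound at all
   nodes at once.  The objective has nonnegative weights and the losses are
   nondecreasing in X, so the largest child loss is the least admissible eta,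
   and the pointwise least X together with it is optimal.  In the two-stage
   problem x, hence X, is constant on stages, so the bound becomes the ceiling
   of the stage-wise maximum of B y, whose running maximum is again constant
   on stages. *)

Lemma bigmax_seed_in d (X : orderType d) (I : finType) (A : {pred I}) (F : I -> X) a b :
  a \in A -> b \in A ->
  \big[Order.max/F a]_(i in A) F i = \big[Order.max/F b]_(i in A) F i.
Proof.
move=> aA bA; apply/le_anti/andP.
by split; apply: bigmax_le => [|i iA]; apply: le_bigmax_cond.
Qed.

Section ScenarioTree.
Variables (T : finType) (r : T) (par : T -> T) (dep : T -> nat) (Tp : nat).
Hypothesis tree : scenario_tree r par dep Tp.

Notation pathP := (Defs.pathP par dep).

Lemma dep_gt0 n : (0 < dep n)%N.
Proof. by case: tree. Qed.

Lemma dep_le n : (dep n <= Tp)%N.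
Proof. by case: tree. Qed.

Lemma dep_par n : n != r -> dep n = (dep (par n)).+1.
Proof. by case: tree => _ _ + _ _; apply. Qed.

Lemma dep_eq1 n : (dep n == 1%N) = (n == r).
Proof.
have [->|nr] := eqVneq n r; first by case: tree => ->.
by rewrite dep_par // eqSS eqn0Ngt dep_gt0.
Qed.

Lemma eq_root_same_dep m n : dep m = dep n -> (m == r) = (n == r).
Proof. by rewrite -!dep_eq1 => ->. Qed.

Lemma dep_par_eq m n : m != r -> n != r -> dep m = dep n -> dep (par m) = dep (par n).
Proof. by move=> mr nr; rewrite (dep_par mr) (dep_par nr) => -[]. Qed.

Lemma dep_iter k n : (k < dep n)%N -> dep (iter k par n) = (dep n - k)%N.
Proof.
elim: k n => [|k IH] n lt_k; first by rewrite subn0.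
have nr : n != r by rewrite -dep_eq1; apply: contraTneq lt_k => ->.
rewrite iterSr IH; first by rewrite (dep_par nr) subSS.
by rewrite -ltnS -(dep_par nr).
Qed.

Lemma pathP_root : pathP r = [set r].
Proof.
apply/setP => m; rewrite !inE; have [dr _ _ _ _] := tree.
apply/existsP/eqP => [[[k lt_k]] /= /eqP <-|->].
  by move: lt_k; rewrite dr ltnS leqn0 => /eqP ->.
by exists (Ordinal (dep_gt0 r)).
Qed.

Lemma pathP_self n : n \in pathP n.
Proof. by rewrite inE; apply/existsP; exists (Ordinal (dep_gt0 n)). Qed.

Lemma pathP_par n : n != r -> pathP n = n |: pathP (par n).
Proof.
move=> nr; apply/setP => m; rewrite !inE (dep_par nr).
apply/existsP/predU1P => [[[[|k] lt_k]] /= /eqP <-|]; first by left.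
  by right; apply/existsP; exists (Ordinal (lt_k : (k < dep (par n))%N)); rewrite /= -iterSr.
case=> [->|/existsP [[k lt_k]] /= /eqP <-]; first by exists ord0.
by exists (Ordinal (lt_k : (k.+1 < (dep (par n)).+1)%N)); apply/eqP; exact: iterSr.
Qed.

Lemma notin_pathP_par n : n != r -> n \notin pathP (par n).
Proof.
move=> nr; rewrite inE; apply/existsP => -[[k lt_k]] /= /eqP def_n.
have := dep_iter lt_k; rewrite def_n (dep_par nr) => e.
by have := leq_subr k (dep (par n)); rewrite -e ltnn.
Qed.

Lemma stage_root : stage dep (dep r) = [set r].
Proof. by have [dr _ _ _ _] := tree; apply/setP => m; rewrite !inE dr dep_eq1. Qed.

Lemma tree_ind (P : T -> Prop) :
  P r -> (forall n, n != r -> P (par n) -> P n) -> forall n, P n.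
Proof.
move=> P_r P_par n; elim: {n}(dep n) {-2}n (erefl (dep n)) => [|d IH] n dn.
  by have := dep_gt0 n; rewrite dn.
have [->//|nr] := eqVneq n r.
by apply: P_par => //; apply: IH; move: dn; rewrite (dep_par nr) => -[].
Qed.

Lemma eq_same_dep (A : Type) (Phi : T -> A) (phi : T -> A -> A) :
  (forall n, n != r -> Phi n = phi n (Phi (par n))) ->
  (forall m n, dep m = dep n -> phi m =1 phi n) ->
  forall m n, dep m = dep n -> Phi m = Phi n.
Proof.
move=> Phi_par phi_dep m; elim/tree_ind: m => [|m mr IH] n dmn.
  by have /eqP <- : n == r by rewrite -(eq_root_same_dep dmn).
have nr : n != r by rewrite -(eq_root_same_dep dmn).
rewrite (Phi_par _ mr) (Phi_par _ nr) (phi_dep _ _ dmn).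
by rewrite (IH (par n) (dep_par_eq mr nr dmn)).
Qed.

Lemma children_nonleaf n : ~~ is_leaf dep Tp n -> exists m, m \in children r par n.
Proof.
move=> nl; have [_ _ _ _ has_child] := tree.
have [|m [mr <-]] := has_child n; first by rewrite ltn_neqAle nl dep_le.
by exists m; rewrite inE mr eqxx.
Qed.

Variable M : nat.
Implicit Types (x : T -> 'I_M -> int) (g : T -> int).

Lemma cum_root x i : cum par dep x r i = x r i.
Proof. by rewrite /cum pathP_root big_set1. Qed.

Lemma cum_par x n i : n != r -> cum par dep x n i = x n i + cum par dep x (par n) i.
Proof. by move=> nr; rewrite /cum pathP_par // big_setU1 //= notin_pathP_par. Qed.

Lemma cum_same_dep x :
  (forall t m n, m \in stage dep t -> n \in stage dep t -> x m = x n) ->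
  forall m n i, dep m = dep n -> cum par dep x m i = cum par dep x n i.
Proof.
move=> x_stage m n i.
apply: (eq_same_dep (Phi := fun n => cum par dep x n i) (phi := fun n => +%R (x n i))).
  by move=> k kr; exact: cum_par.
by move=> k l dkl v; rewrite (x_stage (dep k) k l) ?inE ?dkl.
Qed.

Definition pathmax g n := \big[Num.max/g n]_(m in pathP n) g m.

Lemma pathmax_root g : pathmax g r = g r.
Proof. by rewrite /pathmax pathP_root big_set1E maxxx. Qed.

Lemma pathmax_ge_self g n : g n <= pathmax g n.
Proof. exact: bigmax_ge_id. Qed.

Lemma pathmax_par g n : n != r -> pathmax g n = Num.max (g n) (pathmax g (par n)).
Proof.
move=> nr; rewrite /pathmax pathP_par //; apply/le_anti/andP; split.
  apply: bigmax_le => [|m /setU1P [->|m_par]]; rewrite le_max ?lexx //.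
  by rewrite le_bigmax_cond ?orbT.
rewrite ge_max bigmax_ge_id /=.
by apply: bigmax_le => [|m m_par]; apply: le_bigmax_cond; rewrite setU1r ?pathP_self.
Qed.

Lemma pathmax_same_dep g :
  (forall m n, dep m = dep n -> g m = g n) ->
  forall m n, dep m = dep n -> pathmax g m = pathmax g n.
Proof.
move=> g_dep.
apply: (eq_same_dep (Phi := pathmax g) (phi := fun n => Num.max (g n))).
  exact: pathmax_par.
by move=> m n dmn v; rewrite (g_dep _ _ dmn).
Qed.

Lemma pathmax_le_cum g x i : (forall m, 0 <= x m i) ->
  (forall m, g m <= cum par dep x m i) -> forall n, pathmax g n <= cum par dep x n i.
Proof.
move=> x_ge0 g_le; elim/tree_ind => [|n nr IH]; first by rewrite pathmax_root.
rewrite pathmax_par // ge_max g_le (le_trans IH) //.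
by rewrite (cum_par x i nr) lerDr.
Qed.

(* [x] is the sequence of increments of the running maximum of [g]; by
   [pathmax_le_cum] its partial sums are the least nonnegative ones above [g]. *)
Section PathmaxIncrements.
Variables (g : T -> 'I_M -> int) (x : T -> 'I_M -> int).
Hypothesis x_def : forall n i,
  x n i = if n == r then g r i else pathmax (g^~ i) n - pathmax (g^~ i) (par n).

Lemma cum_pathmax_incr n i : cum par dep x n i = pathmax (g^~ i) n.
Proof.
elim/tree_ind: n => [|n nr IH]; first by rewrite cum_root x_def eqxx pathmax_root.
by rewrite cum_par // IH x_def (negPf nr) subrK.
Qed.

Lemma pathmax_incr_ge0 n i : 0 <= g r i -> 0 <= x n i.
Proof.
rewrite x_def; case: eqP => // /eqP nr _.
by rewrite subr_ge0 [X in _ <= X](pathmax_par _ nr) le_max lexx orbT.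
Qed.

End PathmaxIncrements.
End ScenarioTree.

Section Optimality.
Variables (R : realType) (T : finType) (r : T) (par : T -> T) (dep : T -> nat).
Variables (Tp M N : nat) (f : nat -> 'I_M -> R) (c : nat -> 'I_M -> 'I_N -> R).
Variables (h : nat -> 'I_M -> R) (lam : nat -> R) (p : T -> R).
Variables (y : T -> 'I_M -> 'I_N -> R) (u : T -> R).
Hypothesis tree : scenario_tree r par dep Tp.
Hypothesis f_ge0 : forall t i, (1 <= t <= Tp)%N -> 0 <= f t i.
Hypothesis h_gt0 : forall t i, (1 <= t <= Tp)%N -> 0 < h t i.
Hypothesis p_gt0 : forall n, 0 < p n.
Hypothesis lam01 : forall t, (2 <= t <= Tp)%N -> 0 <= lam t <= 1.
Hypothesis y_ge0 : forall n i j, 0 <= y n i j.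

Notation B m i := (Bmat h (dep m) (y m) i).
Notation cum := (cum par dep).
Notation loss := (lossn dep f c y u).
Notation eta := (etaOf r par dep f c y u).
Notation obj := (objective r par dep Tp f lam p).
Notation feasM := (feasible_RMS r par dep f c h y u).
Notation feasT := (feasible_RTS r par dep f c h y u).
Notation is_leaf := (is_leaf dep Tp).
Notation cB := (cB dep h y).
Notation cBT := (cBT dep h y).

Lemma dep_range m : (1 <= dep m <= Tp)%N.
Proof. by rewrite (dep_gt0 tree) (dep_le tree). Qed.

Lemma Bmat_ge0 m i : 0 <= B m i.
Proof.
rewrite mulr_ge0 ?sumr_ge0 // invr_ge0 ltW //.
exact: h_gt0 (dep_range m).
Qed.

Lemma ftil_ge0 n i : 0 <= ftil r dep f lam n i.
Proof.
rewrite /ftil; have [_|nr] := eqVneq n r; first exact: f_ge0 (dep_range n).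
rewrite mulr_ge0 ?(f_ge0 _ (dep_range n)) // subr_ge0.
have dn : (1 < dep n <= Tp)%N.
  by rewrite (dep_par tree nr) ltnS (dep_gt0 tree) -(dep_par tree nr) (dep_le tree).
by have /andP [_ ->] := lam01 dn.
Qed.

Lemma ltil_ge0 n : 0 <= ltil dep Tp lam n.
Proof.
rewrite /ltil; case: ifPn => // nl.
have dn : (1 < (dep n).+1 <= Tp)%N.
  by rewrite ltnS (dep_gt0 tree) ltn_neqAle nl (dep_le tree).
by have /andP [-> _] := lam01 dn.
Qed.

Lemma lossn_le X X' n : (forall i, X i <= X' i) -> loss X n <= loss X' n.
Proof.
move=> le_X; rewrite /lossn !lerD2r ler_sum // => i _.
by rewrite ler_wpM2l ?ler_int ?(f_ge0 _ (dep_range n)).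
Qed.

Lemma lossn_le_etaOf x n : n != r -> loss (cum x n) n <= eta x (par n).
Proof.
move=> nr; have n_child : n \in children r par (par n) by rewrite inE nr eqxx.
rewrite /etaOf; case: pickP => [m0 _|none]; last by have := none n; rewrite n_child.
exact: (le_bigmax_cond _ (fun m => loss (cum x m) m) n_child).
Qed.

Lemma etaOf_le x e n : ~~ is_leaf n ->
  (forall m, m \in children r par n -> loss (cum x m) m <= e n) -> eta x n <= e n.
Proof.
move=> nl le_e; rewrite /etaOf; case: pickP => [m0 m0_child|none].
  exact: bigmax_le (le_e m0 m0_child) le_e.
by have [m m_child] := children_nonleaf tree nl; have := none m; rewrite m_child.
Qed.

(* At leaves [eta] has coefficient [ltil = 0], so it need not be compared there. *)
Lemma objective_le x e x' e' :
  (forall n i, cum x n i <= cum x' n i) -> (forall n, ~~ is_leaf n -> e n <= e' n) ->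
  obj x e <= obj x' e'.
Proof.
move=> le_cum le_e; apply: ler_sum => n _; apply: ler_wpM2l; first exact: ltW.
apply: lerD; first by apply: ler_sum => i _; rewrite ler_wpM2l ?ftil_ge0 ?ler_int.
have := ltil_ge0 n; rewrite /ltil; case: ifPn => [_ _|nl lam_ge0].
  by rewrite !mul0r.
by rewrite ler_wpM2l ?le_e.
Qed.

Lemma feasible_RMS_etaOf x : (forall n i, 0 <= x n i) ->
  (forall n i, B n i <= (cum x n i)%:~R) -> feasM x (eta x).
Proof. by move=> x_ge0 x_B; split=> // n; apply: lossn_le_etaOf. Qed.

(* With the least cumulative capacities, monotonicity of [loss] makes [eta x]
   dominated by the epigraph variable of every competitor. *)
Lemma optimal_least_cum (F : (T -> 'I_M -> int) -> (T -> R) -> Prop) x :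
  (forall x' e', F x' e' -> feasM x' e') -> F x (eta x) ->
  (forall x' e', F x' e' -> forall n i, cum x n i <= cum x' n i) ->
  optimal r par dep Tp f lam p F x (eta x).
Proof.
move=> FM Fx least; split=> // x' e' Fx'; have [_ _ e'_loss] := FM _ _ Fx'.
apply: objective_le => [|n nl]; first exact: least Fx'.
apply: etaOf_le => // m; rewrite inE => /andP [mr /eqP <-].
exact: le_trans (lossn_le _ (least _ _ Fx' m)) (e'_loss m mr).
Qed.

Lemma cB_ge0 m i : 0 <= cB m i.
Proof. by rewrite ceil_ge0 (lt_le_trans _ (Bmat_ge0 m i)) ?ltrN10. Qed.

Lemma optimal_xMS :
  optimal r par dep Tp f lam p feasM (xMS r par dep h y) (etaMS r par dep f c h y u).
Proof.
have cum_xMS n i : cum (xMS r par dep h y) n i = pathmax par dep (cB^~ i) n.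
  exact: (cum_pathmax_incr tree).
apply: optimal_least_cum => // [|x e [x_ge0 x_B _] n i].
  apply: feasible_RMS_etaOf => n i.
    by apply: (pathmax_incr_ge0 tree) => //; exact: cB_ge0.
  by rewrite cum_xMS (le_trans (ceil_ge _)) // ler_int pathmax_ge_self.
by rewrite cum_xMS; apply: (pathmax_le_cum tree) => // m; rewrite ceil_le_int.
Qed.

Lemma cBT_root i : cBT r i = cB r i.
Proof. by rewrite /cBT (stage_root tree) big_set1E maxxx. Qed.

Lemma B_le_cBT m i : B m i <= (cBT m i)%:~R.
Proof. exact: le_trans (bigmax_ge_id _ _ _ _) (ceil_ge _). Qed.

Lemma cBT_same_dep m n i : dep m = dep n -> cBT m i = cBT n i.
Proof.
move=> dmn; have st : stage dep (dep m) = stage dep (dep n) by rewrite dmn.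
by rewrite /cBT st (bigmax_seed_in (fun l => B l i) (a := m) (b := n)) // inE ?dmn.
Qed.

Lemma cBT_le_cum x e m i : feasT x e -> cBT m i <= cum x m i.
Proof.
case=> [[_ x_B _] x_stage]; rewrite ceil_le_int.
apply: bigmax_le => // l; rewrite inE => /eqP dlm.
by rewrite (cum_same_dep tree x_stage i (esym dlm)).
Qed.

Lemma xTS_same_dep m n : dep m = dep n -> xTS r par dep h y m = xTS r par dep h y n.
Proof.
move=> dmn; apply: functional_extensionality => i.
rewrite /xTS -(eq_root_same_dep tree dmn); case: ifPn => // mr.
have nr : n != r by rewrite -(eq_root_same_dep tree dmn).
have cmTS_dep k l : dep k = dep l -> cummaxTS par dep h y k i = cummaxTS par dep h y l i.
  exact: (pathmax_same_dep tree (g := cBT^~ i) (fun k l => @cBT_same_dep k l i)).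
by rewrite (cmTS_dep _ _ dmn) (cmTS_dep _ _ (dep_par_eq tree mr nr dmn)).
Qed.

Lemma optimal_xTS :
  optimal r par dep Tp f lam p feasT (xTS r par dep h y) (etaTS r par dep f c h y u).
Proof.
have xTS_def n i : xTS r par dep h y n i = if n == r then cBT r i
    else pathmax par dep (cBT^~ i) n - pathmax par dep (cBT^~ i) (par n).
  by rewrite /xTS cBT_root.
have cum_xTS := cum_pathmax_incr tree xTS_def.
apply: optimal_least_cum => [x e []//| |x e feas n i].
  split=> [|t m n]; last by rewrite !inE => /eqP dm /eqP dn; apply: xTS_same_dep; rewrite dm dn.
  apply: feasible_RMS_etaOf => n i.
    by apply: (pathmax_incr_ge0 tree xTS_def); rewrite cBT_root cB_ge0.
  by rewrite cum_xTS (le_trans (B_le_cBT n i)) // ler_int; exact: pathmax_ge_self.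
have [[x_ge0 _ _] _] := feas.
by rewrite cum_xTS; apply: (pathmax_le_cum tree) => // m; exact: cBT_le_cum feas.
Qed.

End Optimality.

Lemma optimal_value_objective (R : realType) (T : finType) r par dep Tp M f lam p feas
    (x : T -> 'I_M -> int) (e : T -> R) :
  optimal r par dep Tp f lam p feas x e ->
  optimal_value r par dep Tp f lam p feas (objective r par dep Tp f lam p x e).
Proof. by case=> feas_x le_obj; split; first by exists x, e. Qed.

Theorem proposition2 (R : realType) (T : finType) (r : T) (par : T -> T)
  (dep : T -> nat) (Tp M N : nat)
  (f : nat -> 'I_M -> R) (c : nat -> 'I_M -> 'I_N -> R) (h : nat -> 'I_M -> R)
  (lam alpha : nat -> R) (p : T -> R)
  (y : T -> 'I_M -> 'I_N -> R) (u : T -> R) :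
  (2 <= Tp)%N -> (1 <= M)%N -> (1 <= N)%N ->
  scenario_tree r par dep Tp ->
  (forall t i, (1 <= t <= Tp)%N -> 0 <= f t i) ->
  (forall t i j, (1 <= t <= Tp)%N -> 0 <= c t i j) ->
  (forall t i, (1 <= t <= Tp)%N -> 0 < h t i) ->
  (forall n, 0 < p n) ->
  (forall t, (1 <= t <= Tp)%N -> \sum_(n in stage dep t) p n = 1) ->
  (forall n, ~~ is_leaf dep Tp n -> \sum_(m in children r par n) p m = p n) ->
  (forall t, (2 <= t <= Tp)%N -> 0 <= lam t <= 1) ->
  (forall t, (2 <= t <= Tp)%N -> 0 < alpha t < 1) ->
  (forall n i j, 0 <= y n i j) ->
  let xM := xMS r par dep h y in
  let eM := etaMS r par dep f c h y u in
  let xT := xTS r par dep h y in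
  let eT := etaTS r par dep f c h y u in
  [/\ optimal r par dep Tp f lam p (feasible_RMS r par dep f c h y u) xM eM,
      optimal r par dep Tp f lam p (feasible_RTS r par dep f c h y u) xT eT,
      optimal_value r par dep Tp f lam p (feasible_RMS r par dep f c h y u)
        (objective r par dep Tp f lam p xM eM) &
      optimal_value r par dep Tp f lam p (feasible_RTS r par dep f c h y u)
        (objective r par dep Tp f lam p xT eT)].
Proof.
move=> _ _ _ tree f_ge0 _ h_gt0 p_gt0 _ _ lam01 _ y_ge0 xM eM xT eT.
have optM : optimal r par dep Tp f lam p (feasible_RMS r par dep f c h y u) xM eM.
  exact: optimal_xMS.
have optT : optimal r par dep Tp f lam p (feasible_RTS r par dep f c h y u) xT eT.
  exact: optimal_xTS.
by split=> //; apply: optimal_value_objective.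
Qed.
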